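(* The identities (A9) $x\wedge(y\wedge z)\approx z\wedge(y\wedge x)$, (J4) $x''\approx x$, (J5) $x'\approx (x\wedge y)'\wedge(x\wedge y')'$ form a 3-base for the variety $\mathbb{BA}$ of Boolean algebras (in the language $\langle\wedge,{}'\rangle$).
   Context: Algebras are of type $\langle \wedge, {}'\rangle$ with $\wedge$ binary and ${}'$ unary. The variety $\mathbb{BA}$ of Boolean algebras in this language consists of the algebras $\langle B,\wedge,{}'\rangle$ obtained from Boolean algebras by keeping only meet and complement (equivalently, the variety generated by the two-element Boolean algebra with meet and complement). A base for a variety is an independent set of identities (no identity in the set follows from the others) that defines the variety; an $n$-base is a base with exactly $n$ identities. *)

From Stdlib Require Import List Bool.

Inductive term : Type :=
| Var : nat -> term
| Meet : term -> term -> term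
| Comp : term -> term.

Definition identity : Type := (term * term)%type.

Record algebra : Type := Algebra {
  carrier :> Type;
  meet : carrier -> carrier -> carrier;
  comp : carrier -> carrier
}.

Fixpoint eval (A : algebra) (v : nat -> A) (t : term) : A :=
  match t with
  | Var n => v n
  | Meet s u => meet A (eval A v s) (eval A v u)
  | Comp s => comp A (eval A v s)
  end.

Definition holds (A : algebra) (e : identity) : Prop :=
  forall v : nat -> A, eval A v (fst e) = eval A v (snd e).

Definition models (A : algebra) (E : list identity) : Prop :=
  forall e, In e E -> holds A e.

Definition consequence (E : list identity) (e : identity) : Prop :=
  forall A : algebra, models A E -> holds A e.

Definition two : algebra := Algebra bool andb negb.

(* Membership in the variety BA generated by the two-element Boolean algebra
   (= Mod(Id(2)) by Birkhoff's HSP theorem). *)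
Definition in_BA (A : algebra) : Prop :=
  forall e : identity, holds two e -> holds A e.

Definition defines_BA (E : list identity) : Prop :=
  forall A : algebra, models A E <-> in_BA A.

Definition x : term := Var 0.
Definition y : term := Var 1.
Definition z : term := Var 2.

Definition A9 : identity := (Meet x (Meet y z), Meet z (Meet y x)).
Definition J4 : identity := (Comp (Comp x), x).
Definition J5 : identity :=
  (Comp x, Meet (Comp (Meet x y)) (Comp (Meet x (Comp y)))).

(* Commutativity comes first: J5 splits b′ into two complements in either
   order, and A9 lets a complement a′ travel across such a product, so
   a′ ⊓ b′ = b′ ⊓ a′, and J4 makes every element a complement.  The meet is
   then a commutative semigroup and J5 is Huntington's axiom in dual form,
   which yields 0 = x ⊓ x′, x ⊓ 1 = x, x ⊓ x = x and x ⊓ (x ⊓ y)′ = x ⊓ y′.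
   For a literal l ∈ {a, a′}, u ↦ l ⊓ u then commutes with the operations,
   so by J5 every term value is the join of a ⊓ t[a:=1] and a′ ⊓ t[a:=0];
   replacing all variables by 0 and 1 reduces an identity to its truth in
   the two-element algebra. *)
From Stdlib Require Import List Arith Lia.

Fixpoint vbound (t : term) : nat :=
  match t with
  | Var n => S n
  | Meet s u => Nat.max (vbound s) (vbound u)
  | Comp s => vbound s
  end.

Lemma eval_ext (A : algebra) (v w : nat -> A) (t : term) :
  (forall n, n < vbound t -> v n = w n) -> eval A v t = eval A w t.
Proof.
  induction t as [n | s IHs u IHu | s IHs]; simpl; intros Hvw.
  - apply Hvw; lia.
  - rewrite IHs, IHu; auto; intros n Hn; apply Hvw; lia.
  - rewrite IHs; auto.
Qed.

Definition upd {X : Type} (v : nat -> X) (k : nat) (a : X) : nat -> X :=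
  fun n => if Nat.eqb n k then a else v n.

Section BooleanLaws.

Variable A : algebra.

Local Infix "⊓" := (meet A) (at level 40, left associativity).
Local Notation "x ′" := (comp A x) (at level 8, left associativity, format "x ′").

Hypothesis meet_rotate : forall x y z : A, x ⊓ (y ⊓ z) = z ⊓ (y ⊓ x).
Hypothesis complK : forall x : A, x′′ = x.
Hypothesis compl_split : forall x y : A, x′ = (x ⊓ y)′ ⊓ (x ⊓ y′)′.

Lemma compl_split_swap (x y : A) : x′ = (x ⊓ y′)′ ⊓ (x ⊓ y)′.
Proof. rewrite (compl_split x y′), complK. reflexivity. Qed.

Lemma meet_compl_rotate (w x y : A) : w ⊓ x′ = (x ⊓ y′)′ ⊓ ((x ⊓ y)′ ⊓ w).
Proof. rewrite (compl_split x y). apply meet_rotate. Qed.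

Lemma meet_compl_reassoc (w x y : A) :
  (x ⊓ y)′ ⊓ w ⊓ x′ = (x ⊓ y)′ ⊓ (w ⊓ x′).
Proof.
  rewrite (meet_compl_rotate ((x ⊓ y)′ ⊓ w) x y′), complK.
  rewrite <- (meet_compl_rotate w x y). reflexivity.
Qed.

Lemma meet_complC (x y : A) : x′ ⊓ y′ = y′ ⊓ x′.
Proof.
  (* y ⊓ (x ⊓ x) = x ⊓ (x ⊓ y) by A9, so both products below have the
     shape needed by meet_compl_reassoc. *)
  assert (HPQ : y′ = (y ⊓ (x ⊓ x)′)′ ⊓ (x ⊓ (x ⊓ y))′).
  { rewrite (compl_split y (x ⊓ x)′), complK, (meet_rotate y x x). reflexivity. }
  assert (HQP : y′ = (x ⊓ (x ⊓ y))′ ⊓ (y ⊓ (x ⊓ x)′)′).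
  { rewrite (compl_split_swap y (x ⊓ x)′), complK, (meet_rotate y x x). reflexivity. }
  rewrite HPQ at 1.
  rewrite meet_rotate, <- meet_compl_reassoc, <- HQP. reflexivity.
Qed.

Lemma meetC (x y : A) : x ⊓ y = y ⊓ x.
Proof. rewrite <- (complK x), <- (complK y). apply meet_complC. Qed.

Lemma meetA (x y z : A) : x ⊓ (y ⊓ z) = x ⊓ y ⊓ z.
Proof. rewrite meet_rotate, (meetC y x). apply meetC. Qed.

Lemma meetCA (x y z : A) : x ⊓ (y ⊓ z) = y ⊓ (x ⊓ z).
Proof. rewrite !meetA, (meetC x y). reflexivity. Qed.

Lemma meetAC (x y z : A) : x ⊓ y ⊓ z = x ⊓ z ⊓ y.
Proof. rewrite <- !meetA, (meetC y z). reflexivity. Qed.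

Lemma meetACA (a b c d : A) : a ⊓ b ⊓ (c ⊓ d) = a ⊓ c ⊓ (b ⊓ d).
Proof. rewrite !meetA, (meetAC a b c). reflexivity. Qed.

Lemma meet_compl_const (x y : A) : x ⊓ x′ = y ⊓ y′.
Proof.
  (* Expanding x by J5 at x′ and x′ by J5 at x gives a product of four
     complements that is symmetric in x and y. *)
  assert (E : forall u v : A,
    u ⊓ u′ = (u′ ⊓ v)′ ⊓ (u′ ⊓ v′)′ ⊓ ((u ⊓ v)′ ⊓ (u ⊓ v′)′)).
  { intros u v. rewrite <- !compl_split, complK. reflexivity. }
  rewrite (E x y), (E y x), (meetC y x), (meetC y x′), (meetC y′ x), (meetC y′ x′).
  rewrite (meetC (x ⊓ y′)′ (x′ ⊓ y′)′), (meetC (x ⊓ y)′ (x′ ⊓ y)′), meetACA.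
  apply meetC.
Qed.

Lemma meet_self_compl (x y : A) : x′ = (x ⊓ x)′ ⊓ (y ⊓ y′)′.
Proof. rewrite (compl_split x x), (meet_compl_const x y). reflexivity. Qed.

Lemma meet_compl_absorb (x y : A) : x ⊓ (y ⊓ y′) = y ⊓ y′.
Proof.
  rewrite (meet_compl_const y x), meetA.
  rewrite (meet_self_compl x (x ⊓ x)) at 1.
  rewrite meetA. apply meet_compl_const.
Qed.

Lemma meet_self_one (x y : A) : x ⊓ x = x ⊓ (y ⊓ y′)′.
Proof.
  pose proof (compl_split (x ⊓ x)′ (y ⊓ y′)′) as H.
  rewrite !complK, <- meet_self_compl, complK, meet_compl_absorb in H.
  exact H.
Qed.

Lemma meet_one (x y : A) : x ⊓ (y ⊓ y′)′ = x.
Proof.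
  (* J5 at a := (x ⊓ 1)′ and b := (x′ ⊓ 1)′, whose meet is 1′ by J5 at 1. *)
  assert (Hab : (x ⊓ (y ⊓ y′)′)′ ⊓ (x′ ⊓ (y ⊓ y′)′)′ = y ⊓ y′).
  { rewrite (meetC x), (meetC x′), <- compl_split. apply complK. }
  pose proof (compl_split (x ⊓ (y ⊓ y′)′)′ (x′ ⊓ (y ⊓ y′)′)′) as H.
  rewrite Hab, !complK in H. rewrite H.
  rewrite <- (meet_self_one x y), meetCA, <- meet_self_compl.
  rewrite meetC, <- meet_self_compl. apply complK.
Qed.

Lemma meet_idem (x : A) : x ⊓ x = x.
Proof. rewrite (meet_self_one x x). apply meet_one. Qed.

Lemma meet_compl_meet_absorb (x y : A) : x ⊓ (x′ ⊓ y)′ = x.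
Proof.
  assert (Hx : x = (x′ ⊓ y)′ ⊓ (x′ ⊓ y′)′).
  { rewrite <- compl_split. symmetry. apply complK. }
  rewrite Hx at 1. rewrite meetAC, meet_idem. symmetry. exact Hx.
Qed.

Lemma meet_compl_meet (x y : A) : x ⊓ (x ⊓ y)′ = x ⊓ y′.
Proof.
  rewrite (compl_split y x), (meetC y x), (meetC y x′), meetCA.
  rewrite meet_compl_meet_absorb. apply meetC.
Qed.

Lemma meet_distr_meet (x y z : A) : x ⊓ (y ⊓ z) = x ⊓ y ⊓ (x ⊓ z).
Proof. rewrite meetACA, meet_idem. reflexivity. Qed.

Lemma compl_expand (z x : A) : z = ((x ⊓ z)′ ⊓ (x′ ⊓ z)′)′.
Proof. rewrite (meetC x), (meetC x′), <- compl_split. symmetry. apply complK. Qed.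

Section ConstantValuations.

Variable o : A.

Definition bconst (b : bool) : A := if b then (o ⊓ o′)′ else o ⊓ o′.

Lemma bconst_meet (b c : bool) : bconst b ⊓ bconst c = bconst (b && c).
Proof.
  destruct b, c; simpl.
  - apply meet_idem.
  - apply meet_compl_absorb.
  - apply meet_one.
  - apply meet_idem.
Qed.

Lemma bconst_compl (b : bool) : (bconst b)′ = bconst (negb b).
Proof. destruct b; simpl; [apply complK | reflexivity]. Qed.

Lemma eval_bconst (w : nat -> bool) (t : term) :
  eval A (fun n => bconst (w n)) t = bconst (eval two w t).
Proof.
  induction t as [n | s IHs u IHu | s IHs]; simpl.
  - reflexivity.
  - rewrite IHs, IHu. apply bconst_meet.
  - rewrite IHs. apply bconst_compl.
Qed.

Definition lit (a : A) (b : bool) : A := if b then a else a′.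

Lemma lit_meet_self (a : A) (b : bool) : lit a b ⊓ a = lit a b ⊓ bconst b.
Proof.
  destruct b; simpl.
  - rewrite meet_idem. symmetry. apply meet_one.
  - rewrite (meetC a′ a), meet_compl_absorb. apply meet_compl_const.
Qed.

Lemma eval_cofactor (t : term) (v : nat -> A) (k : nat) (b : bool) :
  lit (v k) b ⊓ eval A v t = lit (v k) b ⊓ eval A (upd v k (bconst b)) t.
Proof.
  induction t as [n | s IHs u IHu | s IHs]; simpl.
  - unfold upd. destruct (Nat.eqb_spec n k) as [-> | _].
    + apply lit_meet_self.
    + reflexivity.
  - rewrite meet_distr_meet, IHs, IHu. symmetry. apply meet_distr_meet.
  - rewrite <- meet_compl_meet, IHs. apply meet_compl_meet.
Qed.

Lemma eval_shannon (t : term) (v : nat -> A) (k : nat) :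
  eval A v t = ((v k ⊓ eval A (upd v k (bconst true)) t)′
                ⊓ ((v k)′ ⊓ eval A (upd v k (bconst false)) t)′)′.
Proof.
  transitivity (((lit (v k) true ⊓ eval A v t)′ ⊓ (lit (v k) false ⊓ eval A v t)′)′).
  - apply compl_expand.
  - rewrite (eval_cofactor t v k true), (eval_cofactor t v k false). reflexivity.
Qed.

Definition splice (k : nat) (v : nat -> A) (w : nat -> bool) : nat -> A :=
  fun n => if n <? k then v n else bconst (w n).

Lemma upd_splice (k : nat) (v : nat -> A) (w : nat -> bool) (b : bool) (n : nat) :
  upd (splice (S k) v w) k (bconst b) n = splice k v (upd w k b) n.
Proof.
  unfold upd, splice. destruct (Nat.eqb_spec n k) as [-> | Hnk].
  - rewrite Nat.ltb_irrefl. reflexivity.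
  - destruct (Nat.ltb_spec n (S k)), (Nat.ltb_spec n k); try reflexivity; lia.
Qed.

Lemma eval_splice_eq (s t : term) (Hst : holds two (s, t)) :
  forall k v w, eval A (splice k v w) s = eval A (splice k v w) t.
Proof.
  induction k as [| k IH]; intros v w.
  - change (eval A (fun n => bconst (w n)) s = eval A (fun n => bconst (w n)) t).
    rewrite !eval_bconst. f_equal. apply Hst.
  - assert (E : forall b u, eval A (upd (splice (S k) v w) k (bconst b)) u
                            = eval A (splice k v (upd w k b)) u).
    { intros b u. apply eval_ext. intros n _. apply upd_splice. }
    rewrite (eval_shannon s _ k), (eval_shannon t _ k), !E, !IH. reflexivity.
Qed.

End ConstantValuations.

Lemma in_BA_of_laws : in_BA A.
Proof.
  intros [s t] Hst v. unfold holds; simpl.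
  pose (N := Nat.max (vbound s) (vbound t)).
  assert (Hv : forall u, vbound u <= N ->
                 eval A v u = eval A (splice (v 0) N v (fun _ => false)) u).
  { intros u Hu. apply eval_ext. intros n Hn. unfold splice.
    destruct (Nat.ltb_spec n N); [reflexivity | lia]. }
  rewrite !Hv by (unfold N; lia).
  apply eval_splice_eq. exact Hst.
Qed.

End BooleanLaws.

Lemma not_consequence (E : list identity) (e : identity) (B : algebra) :
  models B E -> ~ holds B e -> ~ consequence E e.
Proof. intros HB He Hc. exact (He (Hc B HB)). Qed.

Definition proj_algebra : algebra := Algebra bool (fun a _ => a) (fun a => a).
Definition const_compl_algebra : algebra := Algebra bool andb (fun _ => false).
Definition id_compl_algebra : algebra := Algebra bool andb (fun a => a).

Ltac check_bool_models :=
  let e := fresh "e" in let He := fresh "He" in let v := fresh "v" in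
  intros e He; simpl in He; intuition subst; intro v;
  cbn; destruct (v 0), (v 1), (v 2); reflexivity.

Theorem theorem7p1 :
  defines_BA (A9 :: J4 :: J5 :: nil)
  /\ ~ consequence (J4 :: J5 :: nil) A9
  /\ ~ consequence (A9 :: J5 :: nil) J4
  /\ ~ consequence (A9 :: J4 :: nil) J5.
Proof.
  split; [| split; [| split]].
  - intros A; split.
    + intros HA. apply in_BA_of_laws.
      * intros a b c.
        exact (HA A9 ltac:(simpl; tauto) (fun n => match n with 0 => a | 1 => b | _ => c end)).
      * intros a. exact (HA J4 ltac:(simpl; tauto) (fun _ => a)).
      * intros a b. exact (HA J5 ltac:(simpl; tauto) (fun n => match n with 0 => a | _ => b end)).
    + intros HA e He. apply HA. revert e He. check_bool_models.
  - apply (not_consequence _ _ proj_algebra); [check_bool_models |].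
    intros H. discriminate (H (fun n => Nat.eqb n 0)).
  - apply (not_consequence _ _ const_compl_algebra); [check_bool_models |].
    intros H. discriminate (H (fun _ => true)).
  - apply (not_consequence _ _ id_compl_algebra); [check_bool_models |].
    intros H. discriminate (H (fun n => Nat.eqb n 0)).
Qed.
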